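(* Let $n\geq 5$. Suppose (1) every graph in $\mathcal{GAQ}_{n-1}$ is even strongly super matched, and (2) every graph in $\mathcal{GAQ}_{n-1}$ is fractional strongly super matched. Then every graph in $\mathcal{GAQ}_n$ is fractional strongly super matched.
   Context: The $n$-dimensional augmented cube $AQ_n$ ($n\geq 1$) has vertex set all binary strings $u_1u_2\cdots u_n$. $AQ_1\cong K_2$ on vertices $0,1$. For $n\geq 2$, $AQ_n$ consists of a copy $AQ^0_{n-1}$ of $AQ_{n-1}$ with $0$ prefixed to every label and a copy $AQ^1_{n-1}$ with $1$ prefixed, plus the following edges: $0u_1\cdots u_{n-1}$ is adjacent to $1v_1\cdots v_{n-1}$ iff either $u_i=v_i$ for all $i$ (cross edge) or $u_i\neq v_i$ for all $i$ (complement edge). Generalized augmented cubes: $\mathcal{GAQ}_4=\{AQ_4\}$; for $n\geq 5$, $\mathcal{GAQ}_n$ consists of all graphs $(V_1\cup V_2, E_1\cup E_2\cup M_1\cup M_2)$ where $(V_1,E_1),(V_2,E_2)$ are (vertex-disjoint copies of, possibly identical) graphs in $\mathcal{GAQ}_{n-1}$ and $M_1,M_2$ are edge-disjoint perfect matchings between $V_1$ and $V_2$; such graphs are $(2n-1)$-regular on $2^n$ vertices. For $F\subseteq V(G)\cup E(G)$, $G-F$ denotes $G$ with the vertices and edges of $F$ deleted. A strong matching preclusion (SMP) set of $G$ is a set $F\subseteq V(G)\cup E(G)$ such that $G-F$ has neither a perfect matching nor an almost-perfect matching (a matching covering all vertices but one); $smp(G)$ is the minimum size of an SMP set, and an SMP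 set of that size is optimal. $G$ is strongly maximally matched if $smp(G)=\delta(G)$ (minimum degree). For an even graph $G$ (even number of vertices), an optimal SMP set $F$ is trivial if $G-F$ has an isolated vertex and $F$ contains an even number of vertices. $G$ is even strongly super matched if it is strongly maximally matched and every optimal SMP set containing an even number of vertices is trivial. A fractional perfect matching of $G$ is $f:E(G)\to[0,1]$ with $\sum_{e\ni v}f(e)=1$ for every vertex $v$. A fractional strong matching preclusion (FSMP) set is $F\subseteq V(G)\cup E(G)$ with $G-F$ having no fractional perfect matching; $fsmp(G)$ is the minimum size of an FSMP set, and an FSMP set of that size is optimal. $G$ is fractional strongly maximally matched if $fsmp(G)=\delta(G)$, and fractional strongly super matched if in addition $G-F$ has an isolated vertex for every optimal FSMP set $F$. *)

From HB Require Import structures.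
From mathcomp Require Import all_boot all_order all_algebra.
Set Implicit Arguments. Unset Strict Implicit. Unset Printing Implicit Defensive.
Import Order.TTheory GRing.Theory Num.Theory.

(* adjacency of AQ_n on binary strings of equal length n (first bit = prefix) *)
Fixpoint aq (u v : seq bool) : bool :=
  match u, v with
  | x :: u', y :: v' =>
      if x == y then aq u' v'
      else (u' == v') || all2 (fun a b => a != b) u' v'
  | _, _ => false
  end.

Definition AQ4 : rel (4.-tuple bool) := fun u v => aq u v.

(* The edge set of the joined graph: E1 ∪ E2 ∪ M1 ∪ M2, where the perfect
   matchings M1, M2 between V1 and V2 are given by bijections m1, m2 : V1 -> V2. *)
Definition gaq_join (T1 T2 : finType) (e1 : rel T1) (e2 : rel T2)
  (m1 m2 : T1 -> T2) (x y : T1 + T2) : bool :=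
  match x, y with
  | inl a, inl b => e1 a b
  | inr a, inr b => e2 a b
  | inl a, inr b => (m1 a == b) || (m2 a == b)
  | inr a, inl b => (m1 b == a) || (m2 b == a)
  end.

(* GAQ n T e : the graph (T, e) belongs to GAQ_n (up to vertex relabelling). *)
Inductive GAQ : nat -> forall T : finType, rel T -> Prop :=
| GAQ_base (T : finType) (e : rel T) (g : T -> 4.-tuple bool) :
    bijective g -> (forall x y, e x y = AQ4 (g x) (g y)) -> GAQ 4 e
| GAQ_step (n : nat) (T T1 T2 : finType) (e : rel T) (e1 : rel T1) (e2 : rel T2)
    (f : T1 + T2 -> T) (m1 m2 : T1 -> T2) :
    5 <= n -> GAQ n.-1 e1 -> GAQ n.-1 e2 ->
    bijective f -> bijective m1 -> bijective m2 ->
    (forall a, m1 a != m2 a) ->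
    (forall x y, e (f x) (f y) = gaq_join e1 e2 m1 m2 x y) ->
    GAQ n e.

Section Graph.
Variables (T : finType) (e : rel T).

Definition is_edge (s : {set T}) : bool :=
  [exists x, exists y, (s == [set x; y]) && e x y].

(* a faulty set F ⊆ V(G) ∪ E(G): F.1 its vertices, F.2 its edges *)
Definition fault := ({set T} * {set {set T}})%type.
Definition valid_fault (F : fault) : Prop := forall s, s \in F.2 -> is_edge s.
Definition fsize (F : fault) : nat := #|F.1| + #|F.2|.

Definition rvert (F : fault) (v : T) : bool := v \notin F.1.
Definition redge (F : fault) (s : {set T}) : bool :=
  [&& is_edge s, [disjoint s & F.1] & s \notin F.2].

Definition has_pm (F : fault) : Prop :=
  exists M : {set {set T}}, (forall s, s \in M -> redge F s) /\
    forall v, rvert F v -> #|[set s in M | v \in s]| = 1.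

Definition has_apm (F : fault) : Prop :=
  exists (M : {set {set T}}) (w : T), (forall s, s \in M -> redge F s) /\
    rvert F w /\ #|[set s in M | w \in s]| = 0 /\
    forall v, rvert F v -> v != w -> #|[set s in M | v \in s]| = 1.

Definition SMP_set (F : fault) : Prop := valid_fault F /\ ~ has_pm F /\ ~ has_apm F.

Definition smp_is (k : nat) : Prop :=
  (exists F, SMP_set F /\ fsize F = k) /\ forall F, SMP_set F -> k <= fsize F.

Definition min_degree : nat := \big[minn/#|T|]_(v : T) #|[set w | e v w]|.

Definition strongly_maximally_matched : Prop := smp_is min_degree.

Definition has_isolated (F : fault) : Prop :=
  exists v, rvert F v /\ forall s, redge F s -> v \notin s.

Definition trivial_SMP (F : fault) : Prop := has_isolated F /\ ~~ odd #|F.1|.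

Definition even_strongly_super_matched : Prop :=
  strongly_maximally_matched /\
  forall F, SMP_set F -> fsize F = min_degree -> ~~ odd #|F.1| -> trivial_SMP F.

(* fractional notions, over an ordered field R (the reals in the paper) *)
Variable R : realFieldType.

Definition has_fpm (F : fault) : Prop :=
  exists f : {set T} -> R,
    (forall s, redge F s -> (0 <= f s <= 1)%R) /\
    forall v, rvert F v -> (\sum_(s | redge F s && (v \in s)) f s)%R = 1%R.

Definition FSMP_set (F : fault) : Prop := valid_fault F /\ ~ has_fpm F.

Definition fsmp_is (k : nat) : Prop :=
  (exists F, FSMP_set F /\ fsize F = k) /\ forall F, FSMP_set F -> k <= fsize F.

Definition frac_strongly_maximally_matched : Prop := fsmp_is min_degree.

Definition frac_strongly_super_matched : Prop :=
  frac_strongly_maximally_matched /\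
  forall F, FSMP_set F -> fsize F = min_degree -> has_isolated F.

End Graph.

From mathcomp Require Import all_boot all_order all_algebra zify.
From Stdlib Require Import Classical.
Set Implicit Arguments. Unset Strict Implicit. Unset Printing Implicit Defensive.
Import Order.TTheory GRing.Theory Num.Theory.

(* A fault set F leaves a fractional perfect matching in G - F iff Hall's
   condition |A| <= |N(A)| holds there: summing the weights around A gives
   necessity, and a system of distinct representatives x |-> g x is a
   permutation of the surviving vertices whose cycles carry weight 1/2 on each
   edge.  It suffices to test sets I disjoint from their neighbourhood S.

   For G in GAQ_n, split F, I and S along the two copies of GAQ_(n-1).  In a
   copy, the induction hypothesis fsmp = 2n-3 applied after deleting a part of
   size 2n-4 of the local fault, or extra vertices of S, bounds |I_k| by |S_k|
   up to what the remaining faults account for; two vertices of I_k have at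
   least 2n neighbours, all in S_k or cut off by faults; and the matching
   edges bound |I_1| by |S_2| plus the faults on them.  When |F| <= 2n-1 and
   G - F has no isolated vertex these inequalities force |I| <= |S|, while the
   star of a vertex is an FSMP set of size 2n-1. *)

Section Set2.
Variable T : finType.
Implicit Types x y u v : T.

Lemma set2_eq x y u v : [set x; y] = [set u; v] ->
  (x = u /\ y = v) \/ (x = v /\ y = u).
Proof.
move=> E.
have hx : x \in [set u; v] by rewrite -E set21.
have hy : y \in [set u; v] by rewrite -E set22.
have hu : u \in [set x; y] by rewrite E set21.
have hv : v \in [set x; y] by rewrite E set22.
case/set2P: hx => hx; case/set2P: hy => hy; subst.
- by left; move: hv => /set2P [] ->.
- by left.
- by right.
- by right; move: hu => /set2P [] ->.
Qed.

Lemma set2_injr x y u : [set x; y] = [set x; u] -> y = u.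
Proof. by case/set2_eq => [[_ ->]|[-> ->]]. Qed.

Lemma disjoint_set2 x y (A : {set T}) :
  [disjoint [set x; y] & A] = (x \notin A) && (y \notin A).
Proof. by rewrite disjoints_subset subUset !sub1set !inE. Qed.

Lemma leq_cards2 x y : #|[set x; y]| <= 2.
Proof. by rewrite cards2; case: (x != y). Qed.

Lemma exists_subset_card (A : {set T}) k : k <= #|A| ->
  exists2 B : {set T}, B \subset A & #|B| = k.
Proof.
case/card_geqP => s [us <- sA]; exists [set x in s]; last by rewrite cardsE; apply/card_uniqP.
by apply/subsetP => x; rewrite inE; apply: sA.
Qed.

End Set2.

Lemma card_preim_sum (T1 T2 T : finType) (f : T1 + T2 -> T) (X : {set T}) :
  bijective f ->
  #|X| = #|[set x | f (inl x) \in X]| + #|[set y | f (inr y) \in X]|.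
Proof.
move=> bf; have -> : #|X| = #|[set p | f p \in X]|.
  rewrite -(card_imset [set p | f p \in X] (bij_inj bf)); apply: eq_card => z.
  case: bf => g fg gf.
  apply/idP/imsetP => [hz|[p]]; last by rewrite inE => h ->.
  by exists (g z); rewrite ?inE gf.
by rewrite -!sum1dep_card big_sumType.
Qed.

Definition nbr (T : finType) (e : rel T) (v : T) : {set T} := [set w | e v w].

Definition alive (T : finType) (F : fault T) : {set T} := [set v | rvert F v].

Definition alive_nbhd (T : finType) (e : rel T) (F : fault T) (A : {set T}) :=
  [set w | rvert F w && [exists x in A, redge e F [set x; w]]].

Section Graph.
Variables (T : finType) (e : rel T).
Hypothesis sym : forall x y, e x y = e y x.

Lemma is_edge_set2 x y : is_edge e [set x; y] = e x y.
Proof.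
apply/idP/idP => [|h]; last first.
  by apply/existsP; exists x; apply/existsP; exists y; rewrite eqxx.
case/existsP => u /existsP [v] /andP [/eqP E huv].
by case: (set2_eq E) => [[-> ->] | [-> ->]] //; rewrite sym.
Qed.

Lemma is_edgeP s : is_edge e s -> exists u v, s = [set u; v] /\ e u v.
Proof. by case/existsP => u /existsP [v] /andP [/eqP E huv]; exists u, v. Qed.

Lemma is_edge_at s a : is_edge e s -> a \in s -> exists w, s = [set a; w] /\ e a w.
Proof.
case/is_edgeP => u [v [-> huv]] /set2P [] ->; first by exists v.
by exists u; rewrite setUC sym.
Qed.

Lemma redge_set2 F x y : redge e F [set x; y] =
  [&& e x y, x \notin F.1, y \notin F.1 & [set x; y] \notin F.2].
Proof. by rewrite /redge is_edge_set2 disjoint_set2 !andbA. Qed.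

Lemma redge_rvert F x y : redge e F [set x; y] -> rvert F x /\ rvert F y.
Proof. by rewrite redge_set2 => /and4P [_ hx hy _]. Qed.

Lemma sum_redge_at (V : nmodType) F (a : T) (phi : {set T} -> V) :
  (\sum_(s | redge e F s && (a \in s)) phi s =
   \sum_(w | redge e F [set a; w]) phi [set a; w])%R.
Proof.
rewrite -(big_imset _ (in2W (fun w w' => @set2_injr _ a w w'))) /=.
apply: eq_bigl => s; apply/idP/imsetP.
- case/andP => hr ha; case: (is_edge_at (andP hr).1 ha) => w [Es _].
  by exists w => //; rewrite -topredE /= -Es.
- by case=> w; rewrite -topredE /= => hw ->; rewrite set21 andbT; exact: hw.
Qed.

Lemma alive_nbhd_gt0 F (I : {set T}) : ~ has_isolated e F -> I \subset alive F ->
  0 < #|I| -> 0 < #|alive_nbhd e F I|.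
Proof.
move=> niso sI; rewrite !card_gt0 => /set0Pn [v vI].
have va : rvert F v by move/subsetP: sI => /(_ v vI); rewrite inE.
case: (boolP [exists s, redge e F s && (v \in s)]) => [/existsP [s /andP [hr vs]]|H].
  case: (is_edge_at (andP hr).1 vs) => w [Es _]; rewrite Es in hr.
  apply/set0Pn; exists w; rewrite inE (redge_rvert hr).2 /=.
  by apply/existsP; exists v; rewrite vI hr.
case: niso; exists v; split => // s hr; apply/negP => vs.
by move/existsPn: H => /(_ s); rewrite hr vs.
Qed.

End Graph.

Section HallMarriage.
Variables (T : finType) (r : rel T).
Implicit Types A B C Y : {set T}.

Definition nbhd_in (Y B : {set T}) := [set y in Y | [exists x in B, r x y]].

Definition hall_cond (A Y : {set T}) :=
  forall B : {set T}, B \subset A -> #|B| <= #|nbhd_in Y B|.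

Definition sdr (A Y : {set T}) (g : T -> T) :=
  {in A &, injective g} /\ forall x, x \in A -> r x (g x) && (g x \in Y).

Lemma sdr_glue A B Y (Y' : {set T}) g1 g2 : Y' \subset Y ->
  (forall x, x \in B -> g1 x \notin Y') ->
  sdr B Y g1 -> sdr (A :\: B) Y' g2 ->
  sdr A Y (fun x => if x \in B then g1 x else g2 x).
Proof.
move=> sY' g1Y' [inj1 h1] [inj2 h2]; split.
- move=> x z xA zA /=.
  case: (boolP (x \in B)) => xB; case: (boolP (z \in B)) => zB.
  + exact: inj1.
  + have zAB : z \in A :\: B by rewrite inE zB zA.
    move=> E; case/andP: (h2 z zAB) => _.
    by rewrite -E (negbTE (g1Y' x xB)).
  + have xAB : x \in A :\: B by rewrite inE xB xA.
    move=> E; case/andP: (h2 x xAB) => _.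
    by rewrite E (negbTE (g1Y' z zB)).
  + by apply: inj2; rewrite inE ?xB ?zB.
- move=> x xA; case: ifP => xB; first exact: h1.
  have xAB : x \in A :\: B by rewrite inE xB xA.
  by case/andP: (h2 x xAB) => -> /(subsetP sY') ->.
Qed.

Lemma hall_cond_tight A B Y : hall_cond A Y -> B \subset A ->
  #|nbhd_in Y B| <= #|B| -> hall_cond (A :\: B) (Y :\: nbhd_in Y B).
Proof.
move=> HY sBA tight C sC.
have sCB : C :|: B \subset A.
  by rewrite subUset sBA andbT; apply: subset_trans sC (subsetDl _ _).
have dCB : [disjoint C & B].
  by apply: disjointWl sC _; rewrite disjoint_sym disjoints_subset setCD subsetUr.
have sub : nbhd_in Y (C :|: B) \subset nbhd_in (Y :\: nbhd_in Y B) C :|: nbhd_in Y B.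
  apply/subsetP => y; rewrite [y \in nbhd_in _ _]in_set.
  case/andP => yY /existsP [x /andP [xCB rxy]].
  rewrite in_setU; case: (boolP (y \in nbhd_in Y B)) => hyB; first by rewrite orbT.
  rewrite orbF [y \in nbhd_in _ _]in_set in_setD hyB yY /=.
  apply/existsP; exists x; rewrite rxy andbT.
  move: xCB; rewrite in_setU => /orP [] // xB.
  by case/negP: hyB; rewrite in_set yY; apply/existsP; exists x; rewrite xB.
have := HY _ sCB; rewrite (cardsU C B) (disjoint_setI0 dCB) cards0 subn0.
have := subset_leq_card sub.
have [h _] := leq_card_setU (nbhd_in (Y :\: nbhd_in Y B) C) (nbhd_in Y B).
lia.
Qed.

Lemma hall_cond_slack A Y x y : x \in A ->
  (forall C, C \subset A -> C != set0 -> C != A -> #|C| < #|nbhd_in Y C|) ->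
  hall_cond (A :\ x) (Y :\ y).
Proof.
move=> xA slack C sC.
case: (eqVneq C set0) => [-> | nC0]; first by rewrite cards0.
have sCA : C \subset A by apply: subset_trans sC (subsetDl _ _).
have nCA : C != A.
  apply: contraTneq sC => ->; apply/subsetPn; exists x => //.
  by rewrite !inE eqxx.
have lt := slack C sCA nC0 nCA.
have sub : nbhd_in Y C :\ y \subset nbhd_in (Y :\ y) C.
  by apply/subsetP => z; rewrite !inE => /andP [zy /andP [zY ->]]; rewrite zy zY.
have := subset_leq_card sub; have := leq_b1 (y \in nbhd_in Y C).
move: lt; rewrite (cardsD1 y (nbhd_in Y C)); lia.
Qed.

Theorem hall_marriage A Y : hall_cond A Y -> exists g, sdr A Y g.
Proof.
have [k] := ubnP #|A|; elim: k A Y => // k IH A Y /[!ltnS] leAk HY.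
case: (set_0Vmem A) => [-> | [x xA]].
  by exists id; split => // z; rewrite inE.
have [B /and4P [sBA nB0 nBA tight] | slack] := pickP
  (fun B : {set T} => [&& B \subset A, B != set0, B != A & #|nbhd_in Y B| <= #|B|]).
- have ltBA : #|B| < #|A| by apply: proper_card; rewrite properEneq nBA sBA.
  have ltAB : #|A :\: B| < #|A|.
    by rewrite cardsDS // -subn_gt0 subKn ?card_gt0 // subset_leq_card.
  have [g1 sdr1] := IH B Y (leq_trans ltBA leAk)
    (fun C sC => HY C (subset_trans sC sBA)).
  have [g2 sdr2] := IH _ _ (leq_trans ltAB leAk) (hall_cond_tight HY sBA tight).
  exists (fun x => if x \in B then g1 x else g2 x).
  apply: (sdr_glue _ _ sdr1 sdr2); first exact: subsetDl.
  move=> z zB; rewrite inE negb_and negbK; apply/orP; left.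
  have /andP [rz gY] := sdr1.2 z zB.
  by rewrite inE gY; apply/existsP; exists z; rewrite zB.
- have := HY [set x]; rewrite sub1set xA cards1 card_gt0 => /(_ isT) /set0Pn [y].
  rewrite inE => /andP [yY /existsP [x' /andP [/set1P -> rxy]]].
  have strict C : C \subset A -> C != set0 -> C != A -> #|C| < #|nbhd_in Y C|.
    by move=> sC nC0 nCA; have := slack C; rewrite /= sC nC0 nCA /= ltnNge => ->.
  have ltA : #|A :\ x| < #|A| by rewrite (cardsD1 x A) xA.
  have [g2 sdr2] := IH _ _ (leq_trans ltA leAk) (hall_cond_slack y xA strict).
  exists (fun z => if z \in [set x] then y else g2 z).
  apply: sdr_glue sdr2; first exact: subsetDl.
    by move=> z _; rewrite !inE eqxx.
  split=> [z w /set1P -> /set1P -> //|z /set1P ->]; by rewrite rxy yY.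
Qed.

End HallMarriage.

Lemma card_set2_map_at (T : finType) (V : {set T}) (g : T -> T) v :
  {in V &, injective g} -> {in V, forall x, g x \in V} ->
  {in V, forall x, g x != x} -> v \in V ->
  #|[set x in V | v \in [set x; g x]]| = 2.
Proof.
move=> ginj gV gneq vV.
have [u uV guv] : exists2 u, u \in V & g u = v.
  have sub : g @: V \subset V by apply/subsetP => y /imsetP [x xV ->]; exact: gV.
  have /eqP E : g @: V == V by rewrite eqEcard sub (card_in_imset ginj) leqnn.
  have : v \in g @: V by rewrite E.
  by case/imsetP => u uV ->; exists u.
have -> : [set x in V | v \in [set x; g x]] = [set v; u].
  apply/setP => x; rewrite !inE; apply/idP/idP.
  - case/andP => xV /orP [/eqP -> | /eqP gx]; first by rewrite eqxx.
    by rewrite (ginj x u) ?eqxx ?orbT // -gx guv.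
  - by case/orP => /eqP ->; rewrite ?vV ?uV ?guv eqxx ?orbT.
by rewrite cards2 -guv gneq.
Qed.

Section FractionalMatching.
Variables (T : finType) (e : rel T) (R : realFieldType).
Hypothesis sym : forall x y, e x y = e y x.
Hypothesis irr : irreflexive e.

Lemma fpm_hall_cond F (A : {set T}) : has_fpm e R F -> A \subset alive F ->
  #|A| <= #|alive_nbhd e F A|.
Proof.
case=> f [f01 fsum] sA.
set N := alive_nbhd e F A.
pose h a w : R := if redge e F [set a; w] then f [set a; w] else 0%R.
have hsym a w : h a w = h w a by rewrite /h setUC.
have hge0 a w : (0 <= h a w)%R.
  by rewrite /h; case: ifP => // hr; case/andP: (f01 _ hr).
have row a : rvert F a -> (\sum_w h a w = 1)%R.
  move=> ha; rewrite -(fsum a ha) (sum_redge_at sym) [RHS]big_mkcond.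
  by apply: eq_bigr => w _.
suff : (#|A|%:R <= #|N|%:R :> R)%R by rewrite ler_nat.
have -> : (#|A|%:R = \sum_(a in A) \sum_(w in N) h a w :> R)%R.
  rewrite -sumr_const; apply: eq_bigr => a aA.
  rewrite -(row a); last by move/subsetP: sA => /(_ a aA); rewrite inE.
  rewrite [RHS]big_mkcond; apply: eq_bigr => w _.
  case: ifP => // wN; rewrite /h; case: ifP => // hr.
  move: wN; rewrite /N inE (redge_rvert sym hr).2 /=.
  by move/negbT/negP; case; apply/existsP; exists a; rewrite aA.
apply: (@le_trans _ _ (\sum_a \sum_(w in N) h a w)%R).
  rewrite [X in (_ <= X)%R](bigID (fun a => a \in A)) /= lerDl.
  by apply: sumr_ge0 => a _; apply: sumr_ge0.
rewrite exchange_big /= -sumr_const; apply: ler_sum => w.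
rewrite /N inE => /andP [wa _].
by rewrite (eq_bigr (fun a => h w a)) ?row // => a _; rewrite hsym.
Qed.

(* Weight 1/2 on the edges of the cycles of g, and 1 on the edge of a 2-cycle. *)
Lemma has_fpm_of_perm F (g : T -> T) : {in alive F &, injective g} ->
  (forall x, x \in alive F -> redge e F [set x; g x]) -> has_fpm e R F.
Proof.
move=> ginj gE.
set V := alive F.
pose cnt s := #|[set x in V | [set x; g x] == s]|.
have gV : {in V, forall x, g x \in V}.
  by move=> x /gE /(redge_rvert sym) [_ h]; rewrite inE.
have gneq : {in V, forall x, g x != x}.
  move=> x /gE; rewrite (redge_set2 sym) => /andP [h _].
  by apply: contraTneq h => ->; rewrite irr.
exists (fun s => (cnt s)%:R / 2%:R)%R; split.
- move=> s hs.
  have c2 : cnt s <= 2.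
    case: (is_edgeP (andP hs).1) => u [w [Es _]].
    apply: leq_trans (leq_cards2 u w); rewrite -Es.
    apply: subset_leq_card; apply/subsetP => x; rewrite inE => /andP [_ /eqP <-].
    by rewrite set21.
  by rewrite divr_ge0 //= ler_pdivrMr ?ltr0n // mul1r ler_nat.
- move=> v hv.
  have key : \sum_(s | redge e F s && (v \in s)) cnt s =
             #|[set x in V | v \in [set x; g x]]|.
    rewrite -sum1dep_card (partition_big (fun x => [set x; g x])
      (fun s => redge e F s && (v \in s))) /=; last first.
      by move=> x /andP [xV vx]; rewrite gE.
    apply: eq_bigr => s /andP [_ vs]; rewrite sum1dep_card /cnt; apply: eq_card => x.
    rewrite !inE; case: (rvert F x); rewrite /= ?andbF //.
    case: eqP => [E|_]; rewrite ?andbF ?andbT //.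
    by move: vs; rewrite -E !inE => ->.
  rewrite -mulr_suml -natr_sum key (card_set2_map_at ginj gV gneq) ?inE //.
  by rewrite divff // pnatr_eq0.
Qed.

(* Hall's condition need only be checked on sets I independent from their
   neighbourhood: for any B, the set B :\: N(B) has neighbourhood inside N(B) :\: B. *)
Lemma has_fpm_of_hall_indep F :
  (forall I : {set T}, I \subset alive F -> [disjoint I & alive_nbhd e F I] ->
     #|I| <= #|alive_nbhd e F I|) -> has_fpm e R F.
Proof.
move=> HI.
pose r x y := redge e F [set x; y].
have nbhdE B : nbhd_in r (alive F) B = alive_nbhd e F B.
  by apply/setP => w; rewrite !inE.
have H : hall_cond r (alive F) (alive F).
  move=> B sB; rewrite nbhdE.
  set I := B :\: alive_nbhd e F B.
  have sub : alive_nbhd e F I \subset alive_nbhd e F B :\: B.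
    apply/subsetP => w; rewrite !inE => /andP [wa /existsP [x /andP [xI rx]]].
    move: xI; rewrite !inE => /andP [xN xB].
    rewrite wa /=; apply/andP; split.
    + apply/negP => wB; move/negP: xN; apply; rewrite (redge_rvert sym rx).1 /=.
      by apply/existsP; exists w; rewrite wB setUC.
    + by apply/existsP; exists x; rewrite xB.
  have sI : I \subset alive F by apply: subset_trans sB; apply: subsetDl.
  have dI : [disjoint I & alive_nbhd e F I].
    rewrite disjoints_subset; apply/subsetP => x xI; rewrite inE.
    apply/negP => xN; move/subsetP: sub => /(_ x xN); rewrite inE.
    by move: xI; rewrite inE => /andP [_ ->].
  have := HI I sI dI; have := subset_leq_card sub.
  have := cardsID (alive_nbhd e F B) B; have := cardsID B (alive_nbhd e F B).
  rewrite setIC -/I; lia.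
have [g [ginj hg]] := hall_marriage H.
by apply: (has_fpm_of_perm ginj) => x /hg /andP [].
Qed.

End FractionalMatching.

Section FaultCounting.
Variables (T : finType) (e : rel T) (R : realFieldType).
Hypothesis sym : forall x y, e x y = e y x.
Hypothesis irr : irreflexive e.

Lemma card_nbr_le_isolated (F : fault T) v : rvert F v ->
  (forall s, redge e F s -> v \notin s) -> #|nbr e v| <= fsize F.
Proof.
move=> hv hiso; rewrite /fsize.
set N := nbr e v.
have h1 : #|N :&: F.1| <= #|F.1| by apply: subset_leq_card; apply: subsetIr.
have h2 : #|N :\: F.1| <= #|F.2|.
  rewrite -(card_imset _ (fun w w' => @set2_injr _ v w w')); apply: subset_leq_card.
  apply/subsetP => s /imsetP [w]; rewrite !inE => /andP [wF evw] ->.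
  apply/negPn/negP => nF; have := hiso [set v; w]; rewrite set21.
  by rewrite (redge_set2 sym) evw (hv : v \notin F.1) wF nF => /(_ isT).
have := cardsID F.1 N; lia.
Qed.

Definition star (v : T) : fault T := (set0, [set [set v; w] | w in nbr e v]).

Lemma star_valid v : valid_fault e (star v).
Proof. by move=> s /imsetP [w]; rewrite inE => evw ->; rewrite (is_edge_set2 sym). Qed.

Lemma fsize_star v : fsize (star v) = #|nbr e v|.
Proof.
by rewrite /fsize /= cards0 (card_imset _ (fun w w' => @set2_injr _ v w w')).
Qed.

Lemma star_no_fpm v : ~ has_fpm e R (star v).
Proof.
case=> f [_ fs]; have := fs v; rewrite /rvert inE => /(_ isT).
rewrite big_pred0; first by move/eqP; rewrite eq_sym oner_eq0.
move=> s; apply/negP => /andP [hr vs].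
case: (is_edge_at sym (andP hr).1 vs) => w [Es evw].
have hin : [set v; w] \in (star v).2 by apply: imset_f; rewrite inE.
by move: hr; rewrite /redge Es hin /= !andbF.
Qed.

Variables (F : fault T) (I S : {set T}).
Hypothesis sI : I \subset alive F.
Hypothesis sN : alive_nbhd e F I \subset S.
Hypothesis dIS : [disjoint I & S].

Lemma nbr_alive_in z w : z \in I -> w \notin F.1 -> e z w ->
  [set z; w] \notin F.2 -> w \in S.
Proof.
move=> zI wa ezw nF; move/subsetP: sN; apply; rewrite inE /rvert wa /=.
apply/existsP; exists z; rewrite zI /= (redge_set2 sym) ezw wa nF !andbT.
by move/subsetP: sI => /(_ z zI); rewrite inE.
Qed.

Variables x y : T.
Hypotheses (xI : x \in I) (yI : y \in I) (xy : x != y).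

Let U := nbr e x :|: nbr e y.
Let K := U :\: S :\: [set x; y].

(* An alive w in K is adjacent to x or y but not in S, so that edge is faulty. *)
Let faulty_edge w := if [set x; w] \in F.2 then [set x; w] else [set y; w].

Lemma faulty_edge_in w : w \in K :\: F.1 -> faulty_edge w \in F.2.
Proof.
rewrite !inE => /andP [wa /andP [/norP [wx wy] /andP [wS wU]]].
rewrite /faulty_edge; case: ifP => // nx.
have eyw : e y w.
  move: wU => /orP [] // exw.
  by move: wS; rewrite (nbr_alive_in xI wa exw (negbT nx)).
by apply/negPn/negP => ny; move: wS; rewrite (nbr_alive_in yI wa eyw).
Qed.

Lemma faulty_edge_inj : {in K :\: F.1 &, injective faulty_edge}.
Proof.
move=> w w'; rewrite !inE.
move=> /andP [_ /andP [/norP [wx wy] _]] /andP [_ /andP [/norP [w'x w'y] _]].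
rewrite /faulty_edge; case: ifP => _; case: ifP => _ E; try exact: set2_injr E.
- case: (set2_eq E) => [[ex _]|[ex ew]]; first by move/eqP: xy.
  by move/eqP: wy; rewrite ew.
- case: (set2_eq E) => [[ex _]|[ex ew]]; first by move: xy; rewrite ex eqxx.
  by move/eqP: wx; rewrite ew.
Qed.

Lemma faulty_edge_neq w : w \in K -> faulty_edge w != [set x; y].
Proof.
rewrite !inE => /andP [/norP [wx wy] _]; apply/eqP.
rewrite /faulty_edge; case: ifP => _ E.
- by move/eqP: wy; rewrite (set2_injr E).
- case: (set2_eq E) => [[ex _]|[_ ew]]; first by move: xy; rewrite ex eqxx.
  by move/eqP: wx; rewrite ew.
Qed.

Lemma card_alive_outer_le : #|K :\: F.1| + e x y <= #|F.2|.
Proof.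
rewrite -(card_in_imset faulty_edge_inj).
have sub : faulty_edge @: (K :\: F.1) \subset F.2.
  by apply/subsetP => s /imsetP [w wK ->]; apply: faulty_edge_in.
case exy: (e x y); last by rewrite addn0 subset_leq_card.
have ya : y \notin F.1 by move/subsetP: sI => /(_ y yI); rewrite inE.
have xyF : [set x; y] \in F.2.
  apply/negPn/negP => nF; move: (disjointFr dIS yI).
  by rewrite (nbr_alive_in xI ya exy nF).
have nxy : [set x; y] \notin faulty_edge @: (K :\: F.1).
  apply/imsetP => [[w]]; rewrite inE => /andP [_ wK] E.
  by move: (faulty_edge_neq wK); rewrite -E eqxx.
suff : #|[set x; y] |: faulty_edge @: (K :\: F.1)| <= #|F.2|.
  by rewrite cardsU1 nxy addnC.
by apply: subset_leq_card; rewrite subUset sub1set xyF.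
Qed.

Lemma card_nbrU_le : #|nbr e x :|: nbr e y| <= fsize F + #|S| + 1.
Proof.
have c2 := card_alive_outer_le.
have c1 : #|K :&: F.1| <= #|F.1| by apply: subset_leq_card; apply: subsetIr.
have cK := cardsID F.1 K.
have cU : #|U| <= #|K| + #|S| + 2 * e x y.
  have sub : U \subset K :|: S :|: (if e x y then [set x; y] else set0).
    apply/subsetP => w wU; rewrite in_setU; apply/orP.
    case: (boolP (w \in [set x; y])) => wxy.
    - right; suff -> : e x y by [].
      move: wxy wU; rewrite /U !inE => /orP [] /eqP ->; rewrite ?irr ?orbF //.
      by rewrite sym.
    - left; rewrite in_setU; case: (boolP (w \in S)) => wS; first by rewrite orbT.
      by rewrite /K !in_setD wxy wS wU.
  apply: leq_trans (subset_leq_card sub) _.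
  apply: leq_trans (leq_card_setU _ _).1 _.
  apply: leq_add; first by apply: leq_trans (leq_card_setU _ _).1 _.
  by case: (e x y); rewrite ?cards0 ?leq_cards2.
rewrite /fsize -/U; case: (e x y) cU c2; lia.
Qed.

End FaultCounting.

Section DeletionBound.
Variables (T : finType) (e : rel T) (R : realFieldType) (delta : nat).
Hypothesis sym : forall x y, e x y = e y x.
Hypothesis fpm_small : forall F, valid_fault e F -> fsize F < delta -> has_fpm e R F.

(* Delete F' and W: the fault F' :|: W is small, so Hall's condition holds for I,
   whose surviving neighbours lie in S :\: W or are touched by the rest of Fk. *)
Lemma card_indep_le_deletion (Fk : fault T) (I S : {set T}) (F' : fault T) (W : {set T}) :
  valid_fault e Fk -> I \subset alive Fk -> [disjoint I & S] ->
  alive_nbhd e Fk I \subset S ->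
  F'.1 \subset Fk.1 -> F'.2 \subset Fk.2 -> W \subset S -> fsize F' + #|W| < delta ->
  #|I| + #|W| <= #|S| + #|Fk.1 :\: F'.1| + 2 * #|Fk.2 :\: F'.2|.
Proof.
move=> vF sI dIS sN s1 s2 sW hsz.
pose F'' : fault T := (F'.1 :|: W, F'.2).
have vF'' : valid_fault e F'' by move=> s hs; apply: vF; move/subsetP: s2; apply.
have sz : fsize F'' < delta.
  apply: leq_ltn_trans hsz; rewrite /fsize /=.
  have := (leq_card_setU F'.1 W).1; lia.
have sI'' : I \subset alive F''.
  apply/subsetP => x xI; rewrite inE /rvert /= in_setU negb_or.
  have xa : x \notin Fk.1 by move/subsetP: sI => /(_ x xI); rewrite inE.
  rewrite (contra (subsetP s1 x) xa) /=.
  by apply: contraT; rewrite negbK => /(subsetP sW); rewrite (disjointFr dIS xI).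
have hall := fpm_hall_cond sym (fpm_small vF'' sz) sI''.
set Z1 := Fk.1 :\: F'.1.
set Z2 := Fk.2 :\: F'.2.
have sub : alive_nbhd e F'' I \subset (S :\: W) :|: Z1 :|: cover Z2.
  apply/subsetP => w; rewrite inE => /andP [wa /existsP [x /andP [xI hr]]].
  move: wa; rewrite /rvert /= in_setU negb_or => /andP [w1 wW].
  have xa : x \notin Fk.1 by move/subsetP: sI => /(_ x xI); rewrite inE.
  move: hr; rewrite (redge_set2 sym) /= => /and4P [exw _ _ nF2].
  case: (boolP (w \in Fk.1)) => wF; first by rewrite !inE wF w1 orbT.
  case: (boolP ([set x; w] \in Fk.2)) => eF.
    apply/setUP; right; apply/bigcupP; exists [set x; w]; last by rewrite set22.
    by rewrite inE eF nF2.
  have wS : w \in S.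
    move/subsetP: sN; apply; rewrite inE /rvert wF /=; apply/existsP; exists x.
    by rewrite xI /= (redge_set2 sym) exw xa wF eF.
  by rewrite !inE wS wW.
have cZ2 : #|cover Z2| <= 2 * #|Z2|.
  apply: leq_trans (leq_card_cover Z2).1 _.
  rewrite mulnC -sum_nat_const; apply: leq_sum => s sZ.
  have : s \in Fk.2 by move: sZ; rewrite inE => /andP [].
  by move/vF => /is_edgeP [u [v [-> _]]]; exact: leq_cards2.
have := cardsDS sW; have := subset_leq_card sW.
have := subset_leq_card sub.
have := (leq_card_setU (S :\: W :|: Z1) (cover Z2)).1.
have := (leq_card_setU (S :\: W) Z1).1.
lia.
Qed.

End DeletionBound.

Definition gaq_like (m : nat) (T : finType) (e : rel T) : Prop :=
  [/\ forall x y, e x y = e y x, irreflexive e,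
      forall v, #|nbr e v| = 2 * m - 1,
      forall u v, u != v -> #|nbr e u :&: nbr e v| <= 2 * m - 4
    & 0 < #|T|].

Fixpoint bitseqs (n : nat) : seq (seq bool) :=
  if n is n'.+1 then map (cons false) (bitseqs n') ++ map (cons true) (bitseqs n')
  else [:: [::]].

Lemma mem_bitseqs n s : (s \in bitseqs n) = (size s == n).
Proof.
elim: n s => [|n IH] [|b s] //=.
- by rewrite mem_cat; apply/negP => /orP []; case/mapP.
- rewrite mem_cat eqSS -IH; apply/idP/idP.
  + by case/orP => /mapP [t ht [_ ->]].
  + by case: b => h; apply/orP; [right|left]; apply/mapP; exists s.
Qed.

Lemma uniq_bitseqs n : uniq (bitseqs n).
Proof.
elim: n => [|n IH] //=; rewrite cat_uniq.
have i0 : injective (cons false) by move=> s t [].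
have i1 : injective (cons true) by move=> s t [].
rewrite (map_inj_uniq i0) (map_inj_uniq i1) IH andbT /=.
by apply/hasPn => s /mapP [t _ ->]; apply/negP; case/mapP => u _ [].
Qed.

Lemma card_tuple_bitseqs n (P : pred (seq bool)) :
  #|[set y : n.-tuple bool | P y]| = count P (bitseqs n).
Proof.
have -> : #|[set y : n.-tuple bool | P y]| = count (fun y : n.-tuple bool => P y) (enum {: n.-tuple bool}).
  rewrite cardsE cardE /enum_mem size_filter count_filter.
  by apply: eq_count => x; rewrite /= ?inE ?andbT.
rewrite -(count_map (@tval n bool) P); apply/permP; apply: uniq_perm.
- by rewrite map_inj_uniq ?enum_uniq //; apply: val_inj.
- exact: uniq_bitseqs.
- move=> s; rewrite mem_bitseqs; apply/mapP/idP => [[t _ ->]|hs].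
  + by rewrite size_tuple.
  + by exists (Tuple hs); rewrite ?mem_enum.
Qed.

Lemma tuple_bitseqs n (x : n.-tuple bool) : tval x \in bitseqs n.
Proof. by rewrite mem_bitseqs size_tuple. Qed.

Lemma aq4_sym_check :
  all (fun u => all (fun v => aq u v == aq v u) (bitseqs 4)) (bitseqs 4).
Proof. by vm_compute. Qed.

Lemma aq4_irr_check : all (fun u => ~~ aq u u) (bitseqs 4).
Proof. by vm_compute. Qed.

Lemma aq4_deg_check : all (fun u => count (aq u) (bitseqs 4) == 7) (bitseqs 4).
Proof. by vm_compute. Qed.

Lemma aq4_common_check : all (fun u => all (fun v =>
  (u == v) || (count (fun w => aq u w && aq v w) (bitseqs 4) <= 4)) (bitseqs 4)) (bitseqs 4).
Proof. by vm_compute. Qed.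

Lemma gaq_like_AQ4 : gaq_like 4 AQ4.
Proof.
split.
- move=> x y; have /allP := allP aq4_sym_check _ (tuple_bitseqs x).
  by move/(_ _ (tuple_bitseqs y))/eqP.
- by move=> x; apply/negbTE; apply: (allP aq4_irr_check); exact: tuple_bitseqs.
- move=> v; rewrite /nbr /AQ4 (card_tuple_bitseqs _ (aq v)).
  by apply/eqP; apply: (allP aq4_deg_check); exact: tuple_bitseqs.
- move=> u v uv.
  have -> : nbr AQ4 u :&: nbr AQ4 v = [set y : 4.-tuple bool | aq u y && aq v y].
    by apply/setP => y; rewrite !inE.
  rewrite (card_tuple_bitseqs _ (fun w => aq u w && aq v w)).
  have /allP := allP aq4_common_check _ (tuple_bitseqs u).
  by move/(_ _ (tuple_bitseqs v)); rewrite (inj_eq val_inj) (negbTE uv).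
- by rewrite card_tuple card_bool.
Qed.

Lemma gaq_like_transport m (T T' : finType) (e : rel T) (e' : rel T') (f : T' -> T) :
  bijective f -> (forall x y, e (f x) (f y) = e' x y) -> gaq_like m e' -> gaq_like m e.
Proof.
move=> bf Hf [s' i' d' c' n'].
have finj : injective f := bij_inj bf.
case: bf => g fg gf.
have nbrE x : nbr e (f x) = f @: nbr e' x.
  apply/setP => w; rewrite -{1}(gf w) inE Hf.
  apply/idP/imsetP => [h | [z hz ->]]; first by exists (g w); rewrite ?inE ?gf.
  by move: hz; rewrite inE fg.
split.
- by move=> x y; rewrite -(gf x) -(gf y) !Hf s'.
- by move=> x; rewrite -(gf x) Hf i'.
- by move=> v; rewrite -(gf v) nbrE card_imset.
- move=> u v uv; rewrite -(gf u) -(gf v) !nbrE -imsetI; last by move=> ? ? _ _; apply: finj.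
  rewrite card_imset //; apply: c'.
  by apply: contraNneq uv => E; rewrite -(gf u) -(gf v) E.
- by rewrite -(bij_eq_card (Bijective fg gf)).
Qed.

Section Join.
Variables (m : nat) (T1 T2 : finType) (e1 : rel T1) (e2 : rel T2) (m1 m2 : T1 -> T2).
Hypothesis m5 : 5 <= m.
Hypothesis G1 : gaq_like m.-1 e1.
Hypothesis G2 : gaq_like m.-1 e2.
Hypothesis bm1 : bijective m1.
Hypothesis bm2 : bijective m2.
Hypothesis hne : forall a, m1 a != m2 a.

Let J := gaq_join e1 e2 m1 m2.
Let P1 (p : T1 + T2) : {set T1} := [set x | J p (inl x)].
Let P2 (p : T1 + T2) : {set T2} := [set y | J p (inr y)].

Let bid : bijective (@id (T1 + T2)). Proof. by exists id. Qed.

Lemma card_nbr_join p : #|nbr J p| = #|P1 p| + #|P2 p|.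
Proof.
by rewrite (card_preim_sum _ bid); congr (_ + _); apply: eq_card => x; rewrite !inE.
Qed.

Lemma card_common_join p q :
  #|nbr J p :&: nbr J q| = #|P1 p :&: P1 q| + #|P2 p :&: P2 q|.
Proof.
by rewrite (card_preim_sum _ bid); congr (_ + _); apply: eq_card => x; rewrite !inE.
Qed.

Lemma card_join_cross_l a : #|P2 (inl a)| = 2.
Proof.
have -> : P2 (inl a) = [set m1 a; m2 a].
  by apply/setP => y; rewrite !inE /J /= ![_ == y]eq_sym.
by rewrite cards2 hne.
Qed.

Lemma card_join_cross_r b : #|P1 (inr b)| = 2.
Proof.
case: bm1 => g1 c1 c1'; case: bm2 => g2 c2 c2'.
have -> : P1 (inr b) = [set g1 b; g2 b].
  apply/setP => x; rewrite !inE /J /=.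
  apply/idP/idP => [/orP [] /eqP <-|/orP [] /eqP ->].
  - by rewrite c1 eqxx.
  - by rewrite c2 eqxx orbT.
  - by rewrite c1' eqxx.
  - by rewrite c2' eqxx orbT.
rewrite cards2; suff -> : g1 b != g2 b by []; apply/eqP => E.
by move: (hne (g1 b)); rewrite c1' E c2' eqxx.
Qed.

Lemma gaq_like_join : gaq_like m J.
Proof.
case: G1 => s1 i1 d1 c1 n1; case: G2 => s2 i2 d2 c2 n2.
have P1l a : P1 (inl a) = nbr e1 a by apply/setP => x; rewrite !inE.
have P2r b : P2 (inr b) = nbr e2 b by apply/setP => x; rewrite !inE.
split.
- by case=> [a|b] [a'|b'] //=; rewrite ?s1 ?s2.
- by case=> [a|b] /=; rewrite ?i1 ?i2.
- case=> [a|b]; rewrite card_nbr_join.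
  + by rewrite P1l d1 card_join_cross_l; lia.
  + by rewrite P2r d2 card_join_cross_r; lia.
- move=> p q pq; rewrite card_common_join.
  have leIl (U : finType) (A B : {set U}) : #|A :&: B| <= #|A|.
    by apply: subset_leq_card; apply: subsetIl.
  have leIr (U : finType) (A B : {set U}) : #|A :&: B| <= #|B|.
    by apply: subset_leq_card; apply: subsetIr.
  case: p q pq => [a|b] [a'|b'] pq.
  + have aa : a != a' by apply: contraNneq pq => ->.
    have := c1 a a' aa; rewrite -!P1l.
    have := leIl _ (P2 (inl a)) (P2 (inl a')); rewrite card_join_cross_l; lia.
  + have := leIr _ (P1 (inl a)) (P1 (inr b')); rewrite card_join_cross_r.
    have := leIl _ (P2 (inl a)) (P2 (inr b')); rewrite card_join_cross_l; lia.
  + have := leIl _ (P1 (inr b)) (P1 (inl a')); rewrite card_join_cross_r.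
    have := leIr _ (P2 (inr b)) (P2 (inl a')); rewrite card_join_cross_l; lia.
  + have bb : b != b' by apply: contraNneq pq => ->.
    have := c2 b b' bb; rewrite -!P2r.
    have := leIl _ (P1 (inr b)) (P1 (inr b')); rewrite card_join_cross_r; lia.
- by rewrite card_sum; lia.
Qed.

End Join.

Lemma GAQ_gaq_like m (T : finType) (e : rel T) : GAQ m e -> gaq_like m e.
Proof.
elim => [T0 e0 g bg He | n T0 T1 T2 e0 e1 e2 f m1 m2 n5 _ IH1 _ IH2 bf bm1 bm2 hne Hf].
- case: bg => h gh hg.
  apply: (@gaq_like_transport 4 _ _ e0 AQ4 h); first by exists g.
    by move=> x y; rewrite He !hg.
  exact: gaq_like_AQ4.
- by apply: (gaq_like_transport bf Hf); exact: gaq_like_join.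
Qed.

Section Side.
Variables (T Tk : finType) (e : rel T) (ek : rel Tk) (R : realFieldType) (n : nat).
Variable iota : Tk -> T.
Hypothesis esym : forall x y, e x y = e y x.
Hypothesis Hi : forall x y, e (iota x) (iota y) = ek x y.
Hypothesis Gk : gaq_like n.-1 ek.
Hypothesis n_gt2 : 2 < n.
Hypothesis fpm_small : forall F, valid_fault ek F -> fsize F < 2 * n - 3 -> has_fpm ek R F.

Definition side_fault (F : fault T) : fault Tk :=
  ([set x | iota x \in F.1], [set s | is_edge ek s && (iota @: s \in F.2)]).

Let eksym : forall x y, ek x y = ek y x. Proof. by case: Gk. Qed.

Lemma side_fault_valid F : valid_fault ek (side_fault F).
Proof. by move=> s; rewrite inE => /andP []. Qed.

Lemma redge_side_fault F x w :
  redge ek (side_fault F) [set x; w] = redge e F [set iota x; iota w].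
Proof.
rewrite (redge_set2 eksym) (redge_set2 esym) Hi /= !inE (is_edge_set2 eksym).
by case: (ek x w) => //=; rewrite imsetU1 imset_set1.
Qed.

Variables (F : fault T) (I : {set T}).
Hypothesis sI : I \subset alive F.
Hypothesis dI : [disjoint I & alive_nbhd e F I].

Lemma side_alive : [set x | iota x \in I] \subset alive (side_fault F).
Proof.
apply/subsetP => x; rewrite !inE /rvert /= inE => xI.
by move/subsetP: sI => /(_ _ xI); rewrite inE.
Qed.

Lemma side_disjoint :
  [disjoint [set x | iota x \in I] & [set x | iota x \in alive_nbhd e F I]].
Proof.
rewrite disjoints_subset; apply/subsetP => x; rewrite in_set => xI.
by rewrite in_setC in_set (disjointFr dI xI).
Qed.

Lemma side_nbhd : alive_nbhd ek (side_fault F) [set x | iota x \in I] \subset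
  [set x | iota x \in alive_nbhd e F I].
Proof.
apply/subsetP => w; rewrite !inE /rvert /= inE => /andP [wa /existsP [x /andP [xI hr]]].
rewrite wa /=; apply/existsP; exists (iota x); move: xI; rewrite inE => ->.
by rewrite -redge_side_fault.
Qed.

Lemma side_card_small_fault : fsize (side_fault F) <= 2 * n - 4 ->
  #|[set x | iota x \in I]| + minn (2 * n - 4 - fsize (side_fault F))
     #|[set x | iota x \in alive_nbhd e F I]| <=
  #|[set x | iota x \in alive_nbhd e F I]|.
Proof.
move=> h; set k := minn _ _.
have [W sW cW] := exists_subset_card (geq_minr (2 * n - 4 - fsize (side_fault F))
  #|[set x | iota x \in alive_nbhd e F I]|).
have := card_indep_le_deletion eksym fpm_small (@side_fault_valid F) side_alive
  side_disjoint side_nbhd (subxx _) (subxx _) sW.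
rewrite !setDv !cards0 cW -/k => H.
suff /H : fsize (side_fault F) + k < 2 * n - 3 by lia.
by have := geq_minl (2 * n - 4 - fsize (side_fault F))
  #|[set x | iota x \in alive_nbhd e F I]|; rewrite -/k; lia.
Qed.

Lemma side_card_large_fault : 2 * n - 4 <= fsize (side_fault F) ->
  #|[set x | iota x \in I]| <=
  #|[set x | iota x \in alive_nbhd e F I]| + 2 * (fsize (side_fault F) - (2 * n - 4)).
Proof.
set Fk := side_fault F => h.
have hm1 := geq_minl #|Fk.1| (2 * n - 4).
have hm2 := geq_minr #|Fk.1| (2 * n - 4).
have [A1 sA1 cA1] := exists_subset_card hm1.
have h2 : 2 * n - 4 - minn #|Fk.1| (2 * n - 4) <= #|Fk.2|.
  by move: h hm1 hm2; rewrite /fsize; lia.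
have [A2 sA2 cA2] := exists_subset_card h2.
have := card_indep_le_deletion eksym fpm_small (@side_fault_valid F) side_alive
  side_disjoint side_nbhd (F' := (A1, A2)) sA1 sA2 (sub0set _).
rewrite cards0 /= (cardsDS sA1) (cardsDS sA2) cA1 cA2 => H.
suff /H : fsize (A1, A2) + 0 < 2 * n - 3 by move: h hm1 hm2; rewrite /fsize; lia.
by rewrite /fsize /= cA1 cA2; move: h hm1 hm2; rewrite /fsize; lia.
Qed.

Lemma side_card_pair : 1 < #|[set x | iota x \in I]| ->
  2 * n <= fsize (side_fault F) + #|[set x | iota x \in alive_nbhd e F I]| + 1.
Proof.
case/card_gt1P => x [y [xI yI xy]].
have ekirr : irreflexive ek by case: Gk.
have := card_nbrU_le eksym ekirr side_alive side_nbhd side_disjoint xI yI xy.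
case: Gk => _ _ dk ck _.
have := ck x y xy; have := cardsUI (nbr ek x) (nbr ek y); rewrite !dk.
lia.
Qed.

End Side.

Section CrossEdges.
Variables (T Tk To : finType) (e : rel T) (ik : Tk -> T) (io : To -> T) (rho : Tk -> To).
Hypothesis esym : forall x y, e x y = e y x.
Hypothesis ikinj : injective ik.
Hypothesis rhoinj : injective rho.
Hypothesis ik_neq_io : forall x y, ik x != io y.
Hypothesis e_rho : forall x, e (ik x) (io (rho x)).

(* Each vertex of I on one side sees its matching partner on the other side
   either in the neighbourhood, or as a faulty vertex, or through a faulty edge. *)
Lemma card_side_le_cross (F : fault T) (I : {set T}) (C : {set {set T}}) :
  (forall x, [set ik x; io (rho x)] \in F.2 -> [set ik x; io (rho x)] \in C) ->
  I \subset alive F ->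
  #|[set x | ik x \in I]| <=
    #|[set y | io y \in alive_nbhd e F I]| + #|[set y | io y \in F.1]| + #|C|.
Proof.
move=> HC sI.
set Ik := [set x | ik x \in I].
set A := [set x in Ik | io (rho x) \in alive_nbhd e F I].
set B := [set x in Ik | io (rho x) \in F.1].
set D := [set x in Ik | [set ik x; io (rho x)] \in F.2].
have sub : Ik \subset A :|: B :|: D.
  apply/subsetP => x xI; have xI' : ik x \in I by move: xI; rewrite inE.
  rewrite !in_setU /A /B /D !inE xI' /=.
  case: (boolP (io (rho x) \in F.1)) => h1; first by rewrite orbT.
  case: (boolP ([set ik x; io (rho x)] \in F.2)) => h2; first by rewrite !orbT.
  rewrite !orbF /rvert h1 /=; apply/existsP; exists (ik x).
  rewrite xI' (redge_set2 esym) e_rho h1 h2 /= andbT.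
  by move/(subsetP sI): xI'; rewrite inE.
have cA : #|A| <= #|[set y | io y \in alive_nbhd e F I]|.
  rewrite -(card_imset _ rhoinj); apply: subset_leq_card; apply/subsetP => y.
  by case/imsetP => x; rewrite /A inE => /andP [_ h] ->; rewrite inE.
have cB : #|B| <= #|[set y | io y \in F.1]|.
  rewrite -(card_imset _ rhoinj); apply: subset_leq_card; apply/subsetP => y.
  by case/imsetP => x; rewrite /B inE => /andP [_ h] ->; rewrite inE.
have dinj : injective (fun x => [set ik x; io (rho x)]).
  move=> x x' E; have : ik x \in [set ik x'; io (rho x')] by rewrite -E set21.
  by case/set2P => [/ikinj //|h]; move: (ik_neq_io x (rho x')); rewrite h eqxx.
have cD : #|D| <= #|C|.
  rewrite -(card_imset _ dinj); apply: subset_leq_card; apply/subsetP => s.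
  by case/imsetP => x; rewrite /D inE => /andP [_ h] ->; apply: HC.
have := subset_leq_card sub.
have := (leq_card_setU (A :|: B) D).1; have := (leq_card_setU A B).1.
lia.
Qed.

End CrossEdges.

(* a, b: fault sizes inside the two copies; c: faulty matching edges;
   i1, i2 and s1, s2: the parts of I and of its neighbourhood in each copy. *)
Lemma join_count (n a b c i1 i2 s1 s2 : nat) :
  5 <= n -> a + b + c <= 2 * n - 1 ->
  (a <= 2 * n - 4 -> i1 + minn (2 * n - 4 - a) s1 <= s1) ->
  (2 * n - 4 <= a -> i1 <= s1 + 2 * (a - (2 * n - 4))) ->
  (1 < i1 -> 2 * n <= a + s1 + 1) ->
  (b <= 2 * n - 4 -> i2 + minn (2 * n - 4 - b) s2 <= s2) ->
  (2 * n - 4 <= b -> i2 <= s2 + 2 * (b - (2 * n - 4))) ->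
  (1 < i2 -> 2 * n <= b + s2 + 1) ->
  i1 <= s2 + b + c -> i2 <= s1 + a + c ->
  (0 < i1 + i2 -> 0 < s1 + s2) ->
  i1 + i2 <= s1 + s2.
Proof. lia. Qed.

Section JoinFpm.
Variables (n : nat) (T T1 T2 : finType) (e : rel T) (e1 : rel T1) (e2 : rel T2).
Variables (f : T1 + T2 -> T) (m1 m2 : T1 -> T2) (R : realFieldType).
Hypothesis n5 : 5 <= n.
Hypothesis bf : bijective f.
Hypothesis bm1 : bijective m1.
Hypothesis Hf : forall x y, e (f x) (f y) = gaq_join e1 e2 m1 m2 x y.
Hypothesis G1 : gaq_like n.-1 e1.
Hypothesis G2 : gaq_like n.-1 e2.
Hypothesis Ge : gaq_like n e.
Hypothesis fpm_small1 :
  forall F, valid_fault e1 F -> fsize F < 2 * n - 3 -> has_fpm e1 R F.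
Hypothesis fpm_small2 :
  forall F, valid_fault e2 F -> fsize F < 2 * n - 3 -> has_fpm e2 R F.

Let i1 (x : T1) := f (inl x).
Let i2 (y : T2) := f (inr y).

Let finj : injective f := bij_inj bf.
Let i1inj : injective i1. Proof. by move=> x y /finj []. Qed.
Let i2inj : injective i2. Proof. by move=> x y /finj []. Qed.
Let i12 x y : i1 x != i2 y. Proof. by apply/eqP => /finj. Qed.
Let esym : forall x y, e x y = e y x. Proof. by case: Ge. Qed.
Let eirr : irreflexive e. Proof. by case: Ge. Qed.
Let He1 x y : e (i1 x) (i1 y) = e1 x y. Proof. by rewrite /i1 Hf. Qed.
Let He2 x y : e (i2 x) (i2 y) = e2 x y. Proof. by rewrite /i2 Hf. Qed.

Definition cross_faults (F : fault T) : {set {set T}} :=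
  [set s in F.2 | [exists x, exists y, s == [set i1 x; i2 y]]].

Lemma card_side_edges_le (F : fault T) :
  #|(side_fault e1 i1 F).2| + #|(side_fault e2 i2 F).2| + #|cross_faults F| <= #|F.2|.
Proof.
rewrite /=.
set E1 := [set s | is_edge e1 s && (i1 @: s \in F.2)].
set E2 := [set s | is_edge e2 s && (i2 @: s \in F.2)].
set X1 := [set i1 @: s | s : {set T1} in E1].
set X2 := [set i2 @: s | s : {set T2} in E2].
have cX1 : #|X1| = #|E1| by rewrite card_imset //; apply: imset_inj.
have cX2 : #|X2| = #|E2| by rewrite card_imset //; apply: imset_inj.
have d12 : [disjoint X1 & X2].
  rewrite disjoints_subset; apply/subsetP => t /imsetP [s].
  rewrite inE => /andP [/is_edgeP [u [v [-> _]]] _] ->; rewrite inE.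
  apply/imsetP => [[s' _ E]].
  have : i1 u \in i2 @: s' by rewrite -E imset_f ?set21.
  by case/imsetP => y _ /eqP; rewrite (negbTE (i12 u y)).
have d3 : [disjoint X1 :|: X2 & cross_faults F].
  rewrite disjoints_subset; apply/subsetP => t.
  rewrite inE => /orP [] /imsetP [s sE ->];
    rewrite !inE; apply/negP => /andP [_ /existsP [x /existsP [y /eqP E]]].
  - have : i2 y \in i1 @: s by rewrite E set22.
    by case/imsetP => z _ /eqP; rewrite eq_sym (negbTE (i12 z y)).
  - have : i1 x \in i2 @: s by rewrite E set21.
    by case/imsetP => z _ /eqP; rewrite (negbTE (i12 x z)).
have sub : X1 :|: X2 :|: cross_faults F \subset F.2.
  rewrite !subUset; apply/andP; split; [apply/andP; split|].
  - by apply/subsetP => t /imsetP [s]; rewrite inE => /andP [_ h] ->.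
  - by apply/subsetP => t /imsetP [s]; rewrite inE => /andP [_ h] ->.
  - by apply/subsetP => t; rewrite inE => /andP [].
have := subset_leq_card sub.
by rewrite cardsU (disjoint_setI0 d3) cardsU (disjoint_setI0 d12) !cards0 !subn0 cX1 cX2.
Qed.

Lemma fsize_sides_le (F : fault T) :
  fsize (side_fault e1 i1 F) + fsize (side_fault e2 i2 F) + #|cross_faults F| <= fsize F.
Proof.
have := card_side_edges_le F; have := card_preim_sum F.1 bf.
rewrite /fsize /= /i1 /i2.
set a1 := #|[set x | f (inl x) \in F.1]|; set a2 := #|[set y | f (inr y) \in F.1]|.
lia.
Qed.

Lemma card_left_le_cross (F : fault T) (I : {set T}) : I \subset alive F ->
  #|[set x | i1 x \in I]| <= #|[set y | i2 y \in alive_nbhd e F I]| +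
    fsize (side_fault e2 i2 F) + #|cross_faults F|.
Proof.
move=> sI; apply: leq_trans (card_side_le_cross (C := cross_faults F) esym i1inj (bij_inj bm1) i12 _ _ sI) _.
- by move=> x; rewrite /i1 /i2 Hf /= eqxx.
- move=> x h; rewrite inE h /=.
  by apply/existsP; exists x; apply/existsP; exists (m1 x).
- by rewrite leq_add2r leq_add2l leq_addr.
Qed.

Lemma card_right_le_cross (F : fault T) (I : {set T}) : I \subset alive F ->
  #|[set y | i2 y \in I]| <= #|[set x | i1 x \in alive_nbhd e F I]| +
    fsize (side_fault e1 i1 F) + #|cross_faults F|.
Proof.
move=> sI; case: bm1 => m1' c1 c1'.
have i21 y x : i2 y != i1 x by rewrite eq_sym i12.
apply: leq_trans (card_side_le_cross (C := cross_faults F) esym i2inj (can_inj c1') i21 _ _ sI) _.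
- by move=> y; rewrite /i1 /i2 Hf /= c1' eqxx.
- move=> y h; rewrite inE h /=.
  by apply/existsP; exists (m1' y); apply/existsP; exists y; rewrite setUC.
- by rewrite leq_add2r leq_add2l leq_addr.
Qed.

Lemma join_has_fpm (F : fault T) : valid_fault e F -> fsize F <= 2 * n - 1 ->
  ~ has_isolated e F -> has_fpm e R F.
Proof.
move=> vF sz niso; apply: (has_fpm_of_hall_indep R esym eirr) => I sI dI.
have n3 : 2 < n by lia.
have := alive_nbhd_gt0 esym niso sI.
rewrite (card_preim_sum I bf) (card_preim_sum (alive_nbhd e F I) bf).
exact: (join_count n5 (leq_trans (fsize_sides_le F) sz)
  (side_card_small_fault esym He1 G1 n3 fpm_small1 sI dI)
  (side_card_large_fault esym He1 G1 n3 fpm_small1 sI dI)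
  (side_card_pair esym He1 G1 n3 sI dI)
  (side_card_small_fault esym He2 G2 n3 fpm_small2 sI dI)
  (side_card_large_fault esym He2 G2 n3 fpm_small2 sI dI)
  (side_card_pair esym He2 G2 n3 sI dI)
  (card_left_le_cross sI) (card_right_le_cross sI)).
Qed.

End JoinFpm.

Section RegularGraph.
Variables (T : finType) (e : rel T) (R : realFieldType) (d : nat).
Hypothesis sym : forall x y, e x y = e y x.
Hypothesis regular : forall v, #|nbr e v| = d.
Hypothesis T_gt0 : 0 < #|T|.

Lemma min_degree_regular : min_degree e = d.
Proof.
have [v _] := card_gt0P T_gt0.
rewrite /min_degree (eq_bigr (fun=> d)); last by move=> w _; exact: regular.
apply/eqP; rewrite eqn_leq; apply/andP; split.
- have : v \in index_enum T by rewrite mem_index_enum.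
  elim: (index_enum T) => [|x r IH] //=.
  by rewrite big_cons geq_minl.
- apply: (big_ind (fun x => d <= x)) => //; first by rewrite -(regular v) max_card.
  by move=> x y hx hy; rewrite leq_min hx hy.
Qed.

Lemma has_fpm_below_fsmp F : frac_strongly_super_matched e R ->
  valid_fault e F -> fsize F < d -> has_fpm e R F.
Proof.
move=> [[_ lb] _] vF hF; apply: NNPP => nf.
by have := lb F (conj vF nf); rewrite min_degree_regular leqNgt hF.
Qed.

Lemma frac_strongly_super_matched_regular :
  (forall F, valid_fault e F -> fsize F <= d -> ~ has_isolated e F -> has_fpm e R F) ->
  frac_strongly_super_matched e R.
Proof.
move=> fpm_small.
have isolated_large F : has_isolated e F -> d <= fsize F.
  by case=> v [va hv]; rewrite -(regular v); exact: (card_nbr_le_isolated sym va hv).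
rewrite /frac_strongly_super_matched /frac_strongly_maximally_matched /fsmp_is.
rewrite min_degree_regular; split; [split|].
- have [v _] := card_gt0P T_gt0.
  exists (star e v); split; last by rewrite fsize_star.
  by split; [exact: (star_valid sym) | exact: star_no_fpm].
- move=> F [vF nf]; case: (classic (has_isolated e F)) => [/isolated_large // | ni].
  by rewrite leqNgt; apply/negP => lt; apply: nf; apply: fpm_small => //; exact: ltnW.
- move=> F [vF nf] sz; apply: NNPP => ni.
  by apply: nf; apply: fpm_small => //; rewrite sz.
Qed.

End RegularGraph.

Lemma GAQ_join_inv n (T : finType) (e : rel T) : GAQ n e -> 5 <= n ->
  exists (T1 T2 : finType) (e1 : rel T1) (e2 : rel T2) (f : T1 + T2 -> T)
    (m1 m2 : T1 -> T2),
  [/\ GAQ n.-1 e1, GAQ n.-1 e2, bijective f, bijective m1 &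
      forall x y, e (f x) (f y) = gaq_join e1 e2 m1 m2 x y].
Proof.
case=> [T0 e0 g bg He | n0 T0 T1 T2 e0 e1 e2 f m1 m2 _ G1 G2 bf bm1 _ _ Hf] //.
by exists T1, T2, e1, e2, f, m1, m2.
Qed.

Theorem theorem3p6 (R : realFieldType) (n : nat) :
  5 <= n ->
  (forall (T : finType) (e : rel T), GAQ n.-1 e -> even_strongly_super_matched e) ->
  (forall (T : finType) (e : rel T), GAQ n.-1 e -> frac_strongly_super_matched e R) ->
  forall (T : finType) (e : rel T), GAQ n e -> frac_strongly_super_matched e R.
Proof.
move=> n5 _ fssm_prev T e HG.
have [esym _ deg _ T_gt0] := GAQ_gaq_like HG.
have [T1 [T2 [e1 [e2 [f [m1 [m2 [HG1 HG2 bf bm1 Hf]]]]]]]] := GAQ_join_inv HG n5.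
have fpm_small (Tk : finType) (ek : rel Tk) : GAQ n.-1 ek ->
    forall F, valid_fault ek F -> fsize F < 2 * n - 3 -> has_fpm ek R F.
  move=> HGk F; have [_ _ degk _ Tk_gt0] := GAQ_gaq_like HGk.
  have -> : 2 * n - 3 = 2 * n.-1 - 1 by lia.
  exact: (has_fpm_below_fsmp degk Tk_gt0 (fssm_prev _ _ HGk)).
apply: (frac_strongly_super_matched_regular esym deg T_gt0) => F.
exact: (join_has_fpm n5 bf bm1 Hf (GAQ_gaq_like HG1) (GAQ_gaq_like HG2)
  (GAQ_gaq_like HG) (fpm_small _ _ HG1) (fpm_small _ _ HG2)).
Qed.
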